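(* Suppose $(b,s) = 1$, $r | b^{\infty}$ (all prime factors of $r$ divide $b$), and $a_m$ is an arbitrary finite sequence of complex numbers. Then \begin{equation*} \sum_{\substack{x \bmod b \\ (x,b)=1}} \Big|\sum_{m \geq 1} a_m S(0, m;s) S(rx,m;br)\Big|^2 \leq br^2 s \sum_{\substack{x \bmod bs \\ (x,bs)=1}} \Big|\sum_{m \equiv 0 \bmod r} a_m e\Big(\frac{x m/r}{bs}\Big)\Big|^2, \end{equation*} where $S(a,b;c)$ denotes the classical Kloosterman sum and $e(x)=e^{2\pi i x}$. *)

From HB Require Import structures.
From mathcomp Require Import all_boot all_order all_algebra.
From mathcomp Require Import all_classical all_reals.
From mathcomp Require Import trigo.
From mathcomp Require Import complex.
Set Implicit Arguments. Unset Strict Implicit. Unset Printing Implicit Defensive.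
Import Order.TTheory GRing.Theory Num.Theory.
Local Open Scope ring_scope.
Local Open Scope complex_scope.

Definition ee (R : realType) (t : R) : R[i] :=
  (cos (2 * pi * t))%:C + 'i * (sin (2 * pi * t))%:C.

(* an inverse of x modulo c (the unique y < c with x*y = 1 mod c when
   coprime x c; 0 otherwise) *)
Definition invmod (c x : nat) : nat :=
  if [pick y : 'I_c | (x * y %% c == 1 %% c)%N] is Some y then nat_of_ord y else 0%N.

Definition kloosterman (R : realType) (a m c : nat) : R[i] :=
  \sum_(x < c | coprime x c)
     ee ((a * x + m * invmod c x)%:R / c%:R : R).

From HB Require Import structures.
From mathcomp Require Import all_boot all_order all_algebra.
From mathcomp Require Import all_classical all_reals.
From mathcomp Require Import trigo.
From mathcomp Require Import complex.
From mathcomp Require Import ring lra zify.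
Import Order.TTheory GRing.Theory Num.Theory.
Set Implicit Arguments. Unset Strict Implicit. Unset Printing Implicit Defensive.
Local Open Scope ring_scope.
Local Open Scope complex_scope.

(* Substituting y -> ybar in S(rx, m; br) and writing the reduced residues mod br
   as z + b t (every prime of r divides b), orthogonality in t gives
   S(rx, m; br) = r [r | m] sum_z e(x zbar / b) e(m z / br).  For m = q r the
   product with S(0, m; s) = sum_v e(m vbar / s) becomes a double sum over reduced
   z mod b and v mod s of e(x zbar / b) e(q w / bs), where w = z s + vbar b r.
   Completing the sum over x and applying Parseval gives the factor b,
   Cauchy-Schwarz in v the factor s, and by the Chinese remainder theorem
   (z, v) |-> w is injective into the reduced residues mod bs. *)

Lemma sqr_sum_le (R : numDomainType) n (y : 'I_n -> R) :
  (forall i, y i \is Num.real) ->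
  (\sum_(i < n) y i) ^+ 2 <= n%:R * \sum_(i < n) y i ^+ 2.
Proof.
move=> yR.
have sum_sqr_diff : \sum_(i < n) \sum_(j < n) (y i - y j) ^+ 2 =
    (n%:R * \sum_(i < n) y i ^+ 2 - (\sum_(i < n) y i) ^+ 2) *+ 2.
  under eq_bigr => i _ do under eq_bigr => j _ do rewrite sqrrB.
  under eq_bigr => i _ do rewrite big_split /= sumrB sumr_const card_ord ?sumrMnl.
  rewrite big_split /= sumrB sumr_const card_ord ?sumrMnl.
  have -> : \sum_(i < n) \sum_(j < n) y i * y j = (\sum_(i < n) y i) ^+ 2.
    by rewrite expr2 mulr_suml; apply: eq_bigr => i _; rewrite mulr_sumr.
  rewrite -mulr_natl; ring.
rewrite -subr_ge0 -(pmulrn_lge0 _ (ltn0Sn 1)) -sum_sqr_diff.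
by apply: sumr_ge0 => i _; apply: sumr_ge0 => j _; rewrite -realEsqr realB.
Qed.

Lemma sqr_normr_sum_le (C : numDomainType) n (P : pred 'I_n) (f : 'I_n -> C) :
  `|\sum_(i < n | P i) f i| ^+ 2 <= n%:R * \sum_(i < n | P i) `|f i| ^+ 2.
Proof.
pose g i := if P i then f i else 0.
have -> : \sum_(i < n | P i) `|f i| ^+ 2 = \sum_(i < n) `|g i| ^+ 2.
  by rewrite big_mkcond; apply: eq_bigr => i _; rewrite /g; case: (P i); rewrite ?normr0 ?expr0n.
rewrite big_mkcond; apply: le_trans (sqr_sum_le (fun i => normr_real (g i))).
by rewrite lerXn2r ?ler_norm_sum // nnegrE ?sumr_ge0.
Qed.

Local Open Scope nat_scope.

Lemma invmod_unique c x y : y < c -> x * y = 1 %[mod c] -> invmod c x = y.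
Proof.
move=> yc xy1; rewrite /invmod; case: pickP => [z /eqP xz1|/(_ (Ordinal yc))]; last first.
  by rewrite /= xy1 eqxx.
have zy : z = y %[mod c].
  have -> : z %% c = z * (x * y) %% c by rewrite -modnMmr xy1 modnMmr muln1.
  have -> : z * (x * y) = y * (x * z) by lia.
  by rewrite -modnMmr xz1 modnMmr muln1.
by rewrite !modn_small in zy.
Qed.

Lemma coprime_invmod_exists c x :
  0 < c -> coprime x c -> exists2 y, y < c & x * y = 1 %[mod c].
Proof.
move=> c0 cx; case: (posnP x) => [x0|xp].
  by move: cx; rewrite x0 /coprime gcd0n => /eqP ->; exists 0.
have [u v uv _] := egcdnP c xp.
exists (u %% c); first exact: ltn_pmod.
by rewrite modnMmr mulnC uv (eqP cx) -modnDml modnMl.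
Qed.

Lemma ltn_invmod c x : 0 < c -> invmod c x < c.
Proof. by rewrite /invmod; case: pickP. Qed.

Lemma mul_invmod c x : 0 < c -> coprime x c -> x * invmod c x = 1 %[mod c].
Proof.
by move=> c0 /(coprime_invmod_exists c0) [y yc xy1]; rewrite (invmod_unique yc xy1).
Qed.

Lemma coprime_invmod c x : 0 < c -> coprime x c -> coprime (invmod c x) c.
Proof.
move=> c0 cx; have := coprime1n c.
by rewrite -coprime_modl -(mul_invmod c0 cx) coprime_modl coprimeMl => /andP[].
Qed.

Lemma invmodK c x : 0 < c -> coprime x c -> x < c -> invmod c (invmod c x) = x.
Proof. by move=> c0 cx xc; apply: invmod_unique; rewrite // mulnC mul_invmod. Qed.

Lemma eqn_modM2l d k m n :
  0 < d -> coprime k d -> (k * m == k * n %[mod d]) = (m == n %[mod d]).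
Proof.
move=> d0 kd; apply/eqP/eqP => [kmn|mn]; last by rewrite -modnMmr mn modnMmr.
have kK u : u = invmod d k * (k * u) %[mod d].
  by rewrite mulnA -modnMml (mulnC _ k) mul_invmod // modnMml mul1n.
by rewrite kK -modnMmr kmn modnMmr -kK.
Qed.

Lemma invmod_mod c d z :
  0 < c -> d %| c -> coprime z c -> invmod c z %% d = invmod d (z %% d).
Proof.
move=> c0 dc zc; have d0 : 0 < d := dvdn_gt0 c0 dc.
symmetry; apply: invmod_unique; first exact: ltn_pmod.
by rewrite modnMml modnMmr -(modn_dvdm _ dc) mul_invmod // modn_dvdm.
Qed.

Lemma big_coprime_invmod (V : nmodType) c (F : nat -> V) : 0 < c ->
  (\sum_(x < c | coprime x c) F x = \sum_(x < c | coprime x c) F (invmod c x))%R.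
Proof.
move=> c0.
pose inv (x : 'I_c) : 'I_c := if coprime x c then Ordinal (ltn_invmod x c0) else x.
have invE x : nat_of_ord (inv x) = if coprime x c then invmod c x else x.
  by rewrite /inv; case: ifP.
have coprime_inv x : coprime (inv x) c = coprime x c.
  by rewrite invE; case: ifP => // /(coprime_invmod c0).
have invK : involutive inv.
  move=> x; apply: val_inj; rewrite /= invE coprime_inv invE.
  by case cx: (coprime x c); rewrite ?invmodK.
rewrite big_mkcond (reindex_inj (inv_inj invK)) [RHS]big_mkcond /=.
by apply: eq_bigr => x _; rewrite coprime_inv invE; case: (coprime x c).
Qed.

Section PrimeDivisors.

Variables b r : nat.
Hypothesis r_gt0 : 0 < r.
Hypothesis primes_r_b : forall p, prime p -> p %| r -> p %| b.

Lemma coprime_dvd_primes z : coprime z b -> coprime z r.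
Proof.
move=> zb; apply/negPn/negP => zr.
have gt1 : 1 < gcdn z r by rewrite ltn_neqAle eq_sym zr gcdn_gt0 r_gt0 orbT.
set p := pdiv (gcdn z r).
have p_pr : prime p := pdiv_prime gt1.
have p_z : p %| z := dvdn_trans (pdiv_dvd _) (dvdn_gcdl _ _).
have p_r : p %| r := dvdn_trans (pdiv_dvd _) (dvdn_gcdr _ _).
have := coprime_dvdr (primes_r_b p_pr p_r) (coprime_dvdl p_z zb).
by rewrite /coprime gcdnn => /eqP p1; rewrite p1 in p_pr.
Qed.

Lemma coprimeMr_primes z : coprime z (b * r) = coprime z b.
Proof. by rewrite coprimeMr andb_idr //; apply: coprime_dvd_primes. Qed.

End PrimeDivisors.

Lemma sum_ord_mul (V : nmodType) b r (F : nat -> V) :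
  (\sum_(z < b * r) F z = \sum_(z < b) \sum_(t < r) F (z + b * t)%N)%R.
Proof.
rewrite -(big_mkord xpredT F); elim: r => [|r IH].
  by rewrite muln0 big_geq // big1 // => z _; rewrite big_ord0.
rewrite mulnS addnC (big_cat_nat _ (leq_addr _ _)) //= IH.
rewrite -{1}[b * r]add0n big_addn addKn big_mkord -big_split /=.
by apply: eq_bigr => z _; rewrite big_ord_recr /=; congr (_ + F _)%R.
Qed.

Lemma sum_coprime_mul (V : nmodType) b r (F : nat -> V) :
  0 < r -> (forall p, prime p -> p %| r -> p %| b) ->
  (\sum_(z < b * r | coprime z (b * r)) F z =
   \sum_(z < b | coprime z b) \sum_(t < r) F (z + b * t)%N)%R.
Proof.
move=> r0 rb; rewrite big_mkcond (sum_ord_mul b r (fun z => if coprime z (b * r) then F z else 0%R)).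
rewrite [RHS]big_mkcond.
apply: eq_bigr => z _.
have coprime_shift t : coprime (z + b * t) b = coprime z b.
  by rewrite -coprime_modl -modnDmr modnMr addn0 coprime_modl.
under eq_bigr => t _ do rewrite coprimeMr_primes // coprime_shift.
by case: (coprime z b) => //; rewrite big1.
Qed.

Local Close Scope nat_scope.

Section AdditiveCharacters.

Context {R : realType}.
Local Notation C := R[i].

Lemma eeE (t : R) : ee t = Complex (cos (2 * pi * t)) (sin (2 * pi * t)).
Proof. by rewrite /ee; simpc. Qed.

Lemma eeD (x y : R) : ee (x + y) = ee x * ee y.
Proof. by rewrite !eeE mulrDr cosD sinD; simpc; congr Complex; ring. Qed.

Lemma ee_nat (n : nat) : ee (n%:R : R) = 1.
Proof.
rewrite eeE; have -> : 2 * pi * n%:R = 0 + (pi *+ 2) *+ n :> R.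
  by rewrite add0r -mulr_natr; ring.
by rewrite (periodicn (@cosD2pi R)) (periodicn (@sinD2pi R)) cos0 sin0.
Qed.

Lemma mul_conj_ee (t : R) : (ee t)^*%R * ee t = 1.
Proof. by rewrite eeE; simpc; rewrite -!expr2 cos2Dsin2 mulrC subrr. Qed.

Lemma ee_neq1 (t : R) : 0 < t < 1 -> ee t != 1.
Proof.
move=> /andP[t_gt0 t_lt1]; rewrite eeE; apply/negP => /eqP[cos1 _].
have sin_gt0 : 0 < sin (pi * t).
  by apply: sin_gt0_pi; rewrite mulr_gt0 ?pi_gt0 //= gtr_pMr ?pi_gt0.
have : sin (pi * t) ^+ 2 = 0.
  have := cos2Dsin2 (pi * t); move: cos1.
  rewrite (_ : 2 * pi * t = pi * t + pi * t) ?cosD ?expr2; [lra | ring].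
by move/eqP; rewrite sqrf_eq0 gt_eqF.
Qed.

Definition efrac (c n : nat) : C := ee (n%:R / c%:R : R).

Lemma efracD c m n : efrac c (m + n) = efrac c m * efrac c n.
Proof. by rewrite /efrac natrD mulrDl eeD. Qed.

Lemma efrac_mull c k : (0 < c)%N -> efrac c (c * k) = 1.
Proof.
by move=> c0; rewrite /efrac natrM mulrAC mulfV ?mul1r ?ee_nat // pnatr_eq0 -lt0n.
Qed.

Lemma efrac_mod c n : (0 < c)%N -> efrac c (n %% c) = efrac c n.
Proof.
by move=> c0; rewrite [in RHS](divn_eq n c) addnC mulnC efracD efrac_mull // mulr1.
Qed.

Lemma efracMr c d n : (0 < d)%N -> efrac (c * d) (n * d) = efrac c n.
Proof.
move=> d0; rewrite /efrac !natrM invfM mulrACA mulfV ?mulr1 //.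
by rewrite pnatr_eq0 -lt0n.
Qed.

Lemma efracX c k t : efrac c (k * t) = efrac c k ^+ t.
Proof.
elim: t => [|t IH]; first by rewrite muln0 /efrac mul0r (ee_nat 0) expr0.
by rewrite mulnSr efracD IH exprSr.
Qed.

Lemma efrac_eq1 c k : (0 < c)%N -> (efrac c k == 1) = (c %| k)%N.
Proof.
move=> c0; apply/idP/idP => [|/dvdnP[q ->]]; last by rewrite mulnC efrac_mull.
apply: contraLR => ndvd; rewrite -efrac_mod //; apply: ee_neq1.
have k_gt0 : (0 < k %% c)%N by rewrite lt0n.
by rewrite divr_gt0 ?ltr0n //= ltr_pdivrMr ?ltr0n // mul1r ltr_nat ltn_pmod.
Qed.

Lemma sum_efrac c k : (0 < c)%N ->
  \sum_(t < c) efrac c (k * t) = if (c %| k)%N then c%:R else 0.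
Proof.
move=> c0; under eq_bigr => t _ do rewrite efracX.
case: ifPn => [ck|nck].
  move: ck; rewrite -efrac_eq1 // => /eqP->.
  by under eq_bigr => t _ do rewrite expr1n; rewrite sumr_const card_ord.
have ne1 : efrac c k != 1 by rewrite efrac_eq1.
have : (efrac c k - 1) * \sum_(t < c) efrac c k ^+ t = 0.
  by rewrite -subrX1 -efracX; apply/eqP; rewrite subr_eq0 efrac_eq1 // dvdn_mull.
by move/eqP; rewrite mulf_eq0 subr_eq0 (negbTE ne1) => /eqP.
Qed.

Lemma conj_efrac c n : (0 < c)%N -> (efrac c n)^*%R = efrac c (n * c.-1).
Proof.
move=> c0; have inv : efrac c n * efrac c (n * c.-1) = 1.
  by rewrite -efracD -{1}[n]muln1 -mulnDr add1n prednK // mulnC efrac_mull.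
by rewrite -[LHS]mulr1 -inv mulrA /efrac mul_conj_ee mul1r.
Qed.

Lemma sum_efrac_orth c u v : (0 < c)%N -> (u < c)%N -> (v < c)%N ->
  \sum_(x < c) efrac c (x * u) * (efrac c (x * v))^*%R = (u == v)%:R * c%:R.
Proof.
move=> c0 uc vc.
under eq_bigr => x _ do rewrite conj_efrac // -efracD -mulnA -mulnDr mulnC.
rewrite sum_efrac //; have [->|neq] := eqVneq u v.
  by rewrite mul1r -{1}[v]muln1 -mulnDr add1n prednK // (dvdn_mull _ (dvdnn c)).
suff /negbTE-> : ~~ (c %| u + v * c.-1)%N by rewrite mul0r.
(* u + v (c - 1) is u - v mod c, without truncated subtraction *)
rewrite /dvdn -(mod0n c) -(eqn_modDr v) -addnA -{2}[v]muln1 -mulnDr addn1 prednK //.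
by rewrite -modnDmr modnMl addn0 add0n !modn_small.
Qed.

Lemma parseval_efrac c (f : nat -> C) : (0 < c)%N ->
  \sum_(x < c) `|\sum_(u < c) f u * efrac c (x * u)| ^+ 2 =
  c%:R * \sum_(u < c) `|f u| ^+ 2.
Proof.
move=> c0; rewrite mulr_sumr.
under eq_bigr => x _ do rewrite normCK rmorph_sum mulr_suml.
under eq_bigr => x _ do under eq_bigr => u _ do rewrite mulr_sumr.
rewrite exchange_big; apply: eq_bigr => u _ /=; rewrite exchange_big /=.
under eq_bigr => v _ do under eq_bigr => x _ do rewrite rmorphM mulrACA.
under eq_bigr => v _ do rewrite -mulr_sumr sum_efrac_orth //.
rewrite (bigD1 u) //= big1 ?addr0 => [|v vu]; last first.
  by rewrite val_eqE eq_sym (negbTE vu) mul0r mulr0.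
by rewrite eqxx mul1r normCK mulrC.
Qed.

Lemma bessel_efrac_invmod c (B : nat -> C) : (0 < c)%N ->
  \sum_(x < c | coprime x c)
     `|\sum_(z < c | coprime z c) efrac c (x * invmod c z) * B z| ^+ 2
  <= c%:R * \sum_(z < c | coprime z c) `|B z| ^+ 2.
Proof.
move=> c0; pose f u := if coprime u c then B (invmod c u) else 0.
have reindex x : \sum_(z < c | coprime z c) efrac c (x * invmod c z) * B z =
    \sum_(u < c) f u * efrac c (x * u).
  rewrite (big_coprime_invmod (fun z => efrac c (x * invmod c z) * B z)) //.
  rewrite big_mkcond; apply: eq_bigr => u _; rewrite /f.
  by case: ifP => cu; rewrite ?mul0r // invmodK // mulrC.
under eq_bigr => x _ do rewrite reindex.
have -> : \sum_(z < c | coprime z c) `|B z| ^+ 2 = \sum_(u < c) `|f u| ^+ 2.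
  rewrite (big_coprime_invmod (fun z => `|B z| ^+ 2)) // big_mkcond.
  by apply: eq_bigr => u _; rewrite /f; case: ifP; rewrite ?normr0 ?expr0n.
rewrite -parseval_efrac // [leRHS](bigID (fun x : 'I_c => coprime x c)) /= lerDl.
by apply: sumr_ge0 => x _; rewrite exprn_ge0.
Qed.

End AdditiveCharacters.

Section KloostermanSums.

Variable R : realType.

Lemma kloosterman0 m s :
  kloosterman R 0 m s = \sum_(v < s | coprime v s) efrac s (m * invmod s v).
Proof. by apply: eq_bigr => v _; rewrite mul0n add0n. Qed.

Lemma kloosterman_scaled b r x m : (0 < b)%N -> (0 < r)%N ->
  (forall p, prime p -> (p %| r)%N -> (p %| b)%N) ->
  kloosterman R (r * x) m (b * r) = (if (r %| m)%N then r%:R else 0) *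
    \sum_(z < b | coprime z b) efrac b (x * invmod b z) * efrac (b * r) (m * z).
Proof.
move=> b0 r0 rb; have br0 : (0 < b * r)%N by rewrite muln_gt0 b0.
pose F y := efrac (b * r) (r * x * y + m * invmod (b * r) y) : R[i].
rewrite /kloosterman (big_coprime_invmod F) //.
have invert (y : 'I_(b * r)) : coprime y (b * r) ->
    F (invmod (b * r) y) = efrac b (x * invmod b (y %% b)) * efrac (b * r) (m * y).
  move=> yc; rewrite /F invmodK // efracD -mulnA (mulnC r) efracMr //.
  by congr (_ * _); rewrite -[LHS]efrac_mod // -modnMmr invmod_mod ?dvdn_mulr // efrac_mod.
rewrite (eq_bigr _ invert).
rewrite (sum_coprime_mul (fun y => efrac b (x * invmod b (y %% b)) * efrac (b * r) (m * y)))
  // mulr_sumr; apply: eq_bigr => z _.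
have mod_b t : ((z + b * t) %% b = z)%N by rewrite addnC mulnC modnMDl modn_small.
have shift t : efrac (b * r) (m * (b * t)) = efrac r (m * t) :> R[i].
  by rewrite (mulnC b r) (mulnC b t) mulnA efracMr.
under eq_bigr => t _ do rewrite mod_b mulnDr efracD shift mulrA.
by rewrite -mulr_sumr sum_efrac // mulrC.
Qed.

End KloostermanSums.

Section KloostermanBound.

Variables (R : realType) (b s r N : nat) (a : nat -> R[i]).
Hypotheses (b_gt0 : (0 < b)%N) (s_gt0 : (0 < s)%N) (r_gt0 : (0 < r)%N).
Hypothesis coprime_bs : coprime b s.
Hypothesis primes_r_b : forall p, prime p -> (p %| r)%N -> (p %| b)%N.

Definition twisted_sum (w : nat) : R[i] :=
  \sum_(1 <= m < N.+1 | (r %| m)%N) a m * efrac (b * s) (w * (m %/ r)).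

(* e(q z / b) e(q r vbar / s) = e(q w / bs) for w = crt_residue z v. *)
Definition crt_residue (z v : nat) : nat := z * s + invmod s v * (b * r).

Lemma twisted_sum_mod w : twisted_sum (w %% (b * s)) = twisted_sum w.
Proof.
have bs_gt0 : (0 < b * s)%N by rewrite muln_gt0 b_gt0.
by apply: eq_bigr => m _; rewrite -efrac_mod // modnMml efrac_mod.
Qed.

Lemma kloosterman_product x m :
  a m * kloosterman R 0 m s * kloosterman R (r * x) m (b * r) =
  if (r %| m)%N then
    r%:R * \sum_(z < b | coprime z b) \sum_(v < s | coprime v s)
      efrac b (x * invmod b z) * (a m * efrac (b * s) (crt_residue z v * (m %/ r)))
  else 0.
Proof.
rewrite kloosterman0 kloosterman_scaled //.
have [/dvdnP[q ->] | _] := boolP (r %| m)%N; last by rewrite !mul0r mulr0.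
rewrite mulnK //=; set S1 := \sum_(v < s | _) _; set S2 := \sum_(z < b | _) _.
have -> : a (q * r)%N * S1 * (r%:R * S2) = r%:R * (S2 * (a (q * r)%N * S1)) by ring.
congr (_ * _); rewrite mulr_suml; apply: eq_bigr => z _.
rewrite 2!mulr_sumr; apply: eq_bigr => v _.
have e_b : efrac (b * r) (q * r * z) = efrac (b * s) (z * s * q) :> R[i].
  by rewrite mulnAC efracMr // -(efracMr _ (q * z) s_gt0); congr efrac; lia.
have e_s : efrac s (q * r * invmod s v) = efrac (b * s) (invmod s v * (b * r) * q) :> R[i].
  by rewrite -(efracMr _ _ b_gt0) mulnC; congr efrac; lia.
by rewrite /crt_residue mulnDl efracD e_b e_s; ring.
Qed.

Lemma sum_kloosterman_product x :
  \sum_(1 <= m < N.+1) a m * kloosterman R 0 m s * kloosterman R (r * x) m (b * r) =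
  r%:R * \sum_(z < b | coprime z b)
           efrac b (x * invmod b z) * \sum_(v < s | coprime v s) twisted_sum (crt_residue z v).
Proof.
under eq_bigr => m _ do rewrite kloosterman_product.
rewrite -big_mkcond /= -mulr_sumr; congr (_ * _).
rewrite exchange_big /=; apply: eq_bigr => z _.
rewrite exchange_big /= mulr_sumr; apply: eq_bigr => v _.
by rewrite /twisted_sum mulr_sumr.
Qed.

Lemma coprime_rs : coprime r s.
Proof. by rewrite coprime_sym (coprime_dvd_primes r_gt0 primes_r_b) // coprime_sym. Qed.

Lemma crt_residue_modl z v : (crt_residue z v = s * z %[mod b])%N.
Proof. by rewrite /crt_residue mulnCA -modnDmr modnMr addn0 mulnC. Qed.

Lemma crt_residue_modr z v : (crt_residue z v = b * r * invmod s v %[mod s])%N.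
Proof. by rewrite /crt_residue modnMDl mulnC. Qed.

Lemma coprime_crt_residue z v :
  coprime z b -> coprime v s -> coprime (crt_residue z v) (b * s).
Proof.
move=> zb vs; rewrite coprimeMr -coprime_modl crt_residue_modl coprime_modl.
rewrite coprimeMl zb coprime_sym coprime_bs -coprime_modl crt_residue_modr.
by rewrite coprime_modl !coprimeMl coprime_bs coprime_rs coprime_invmod.
Qed.

Lemma crt_residue_inj (z1 z2 : 'I_b) (v1 v2 : 'I_s) :
  coprime v1 s -> coprime v2 s ->
  (crt_residue z1 v1 = crt_residue z2 v2 %[mod b * s])%N -> z1 = z2 /\ v1 = v2.
Proof.
have sb : coprime s b by rewrite coprime_sym.
have brs : coprime (b * r) s by rewrite coprimeMl coprime_bs coprime_rs.
move=> v1s v2s /eqP; rewrite (chinese_remainder coprime_bs).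
rewrite !crt_residue_modl !crt_residue_modr !eqn_modM2l //.
rewrite !modn_small ?ltn_invmod // => /andP[/eqP z12 /eqP inv12].
split; apply: val_inj => //=.
by rewrite -(invmodK s_gt0 v1s (ltn_ord v1)) inv12 invmodK.
Qed.

Lemma sum_crt_residue_le :
  \sum_(z < b | coprime z b) \sum_(v < s | coprime v s)
     `|twisted_sum (crt_residue z v)| ^+ 2
  <= \sum_(x < b * s | coprime x (b * s)) `|twisted_sum x| ^+ 2.
Proof.
have bs_gt0 : (0 < b * s)%N by rewrite muln_gt0 b_gt0.
pose w (p : 'I_b * 'I_s) : 'I_(b * s) := Ordinal (ltn_pmod (crt_residue p.1 p.2) bs_gt0).
pose A := [set p : 'I_b * 'I_s | coprime p.1 b && coprime p.2 s].
pose g (x : 'I_(b * s)) := `|twisted_sum x| ^+ 2.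
rewrite pair_big_dep /= (eq_bigr (fun p => g (w p))); last first.
  by move=> p _; rewrite /g /= twisted_sum_mod.
rewrite (eq_bigl [in A]); last by move=> p; rewrite inE.
rewrite -big_imset; last first.
  move=> [z1 v1] [z2 v2]; rewrite !inE /= => /andP[_ v1s] /andP[_ v2s] /(congr1 val) /=.
  by move=> /(crt_residue_inj v1s v2s) [-> ->].
have w_coprime x : x \in w @: A -> coprime x (b * s).
  move=> /imsetP[[z v]]; rewrite inE /= => /andP[zb vs] ->.
  by rewrite coprime_modl coprime_crt_residue.
rewrite big_mkcond [leRHS]big_mkcond /=; apply: ler_sum => x _.
have [/w_coprime -> | _] := boolP (x \in w @: A); first exact: lexx.
by case: ifP => // _; rewrite exprn_ge0.
Qed.

End KloostermanBound.

Theorem lemma11p4 (R : realType) (b s r N : nat) (a : nat -> R[i])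
  (hb : (0 < b)%N) (hs : (0 < s)%N) (hr : (0 < r)%N)
  (hbs : coprime b s)
  (hrb : forall p : nat, prime p -> (p %| r)%N -> (p %| b)%N) :
  \sum_(x < b | coprime x b)
     `| \sum_(1 <= m < N.+1)
          a m * kloosterman R 0 m s * kloosterman R (r * x) m (b * r) | ^+ 2
  <= (b * r ^ 2 * s)%N%:R *
     \sum_(x < b * s | coprime x (b * s))
       `| \sum_(1 <= m < N.+1 | (r %| m)%N)
            a m * ee ((x * (m %/ r))%N%:R / (b * s)%N%:R : R) | ^+ 2.
Proof.
under eq_bigr => x _ do rewrite sum_kloosterman_product // normrM exprMn normr_nat.
pose B z := \sum_(v < s | coprime v s) twisted_sum b s r N a (crt_residue b s r z v).
have -> : (b * r ^ 2 * s)%N%:R = r%:R ^+ 2 * (b%:R * s%:R) :> R[i].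
  by rewrite mulnAC mulnC natrM natrX natrM.
rewrite -mulr_sumr -[leRHS]mulrA ler_pM2l ?exprn_gt0 ?ltr0n //.
apply: le_trans (bessel_efrac_invmod B hb) _; rewrite -[leRHS]mulrA ler_pM2l ?ltr0n //.
apply: (@le_trans _ _ (s%:R * \sum_(z < b | coprime z b) \sum_(v < s | coprime v s)
                     `|twisted_sum b s r N a (crt_residue b s r z v)| ^+ 2)).
  by rewrite mulr_sumr; apply: ler_sum => z _; apply: sqr_normr_sum_le.
by rewrite ler_pM2l ?ltr0n // sum_crt_residue_le.
Qed.
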